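(* Let $n$ be a positive integer and let $T$ be a nonempty subset of $\mathbb{N}_0^d$. If there are points $\alpha,\beta\in E_n^\infty(T)$ such that $\beta-\alpha\in\mathbb{N}^d$ (all entries strictly positive), then $E_n^\infty(T)=E_1^\infty(T\cup\{\alpha,\beta\})=\Lambda(T)\cap\mathbb{N}_0^d$.
   Context: $\mathbb{N}=\{1,2,\dots\}$, $\mathbb{N}_0=\{0,1,2,\dots\}$. For nonempty $\Gamma\subseteq\mathbb{N}_0^d$, $\Lambda(\Gamma)$ is the coset in $\mathbb{Z}^d$ generated by $\Gamma$ (smallest coset of a subgroup of $\mathbb{Z}^d$ containing $\Gamma$); each $\lambda\in\Lambda(\Gamma)$ can be written $\lambda=\gamma+\sum_{\alpha\in\Gamma,\alpha\neq\gamma}m_{\gamma,\alpha}(\alpha-\gamma)$ with $\gamma\in\Gamma$ and integers $m_{\gamma,\alpha}$, finitely many nonzero. $d(\Gamma,\lambda)$ is the infimum over all such representations of $\max\big(\sum_{m_{\gamma,\alpha}>0}m_{\gamma,\alpha},-\sum_{m_{\gamma,\alpha}<0}m_{\gamma,\alpha}\big)$, and $E_n(\Gamma)=\{\lambda\in\Lambda(\Gamma)\cap\mathbb{N}_0^d:d(\Gamma,\lambda)\leq n\}$. Set $E_n^1(T)=E_n(T)$, $E_n^{k+1}(T)=E_n(E_n^k(T))$, and $E_n^\infty(T)=\bigcup_{k\geq1}E_n^k(T)$. *)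

From mathcomp Require Import all_boot all_order all_algebra.
Set Implicit Arguments. Unset Strict Implicit. Unset Printing Implicit Defensive.
Import Order.TTheory GRing.Theory Num.Theory.
Local Open Scope ring_scope.

Definition pt (d : nat) := 'rV[int]_d.
Definition ptset (d : nat) := pt d -> Prop.

Definition in_N0 d (v : pt d) : Prop := forall i : 'I_d, 0 <= v ord0 i.
Definition in_N d (v : pt d) : Prop := forall i : 'I_d, 0 < v ord0 i.

Definition is_subgroup d (H : ptset d) : Prop :=
  H 0 /\ forall x y, H x -> H y -> H (x - y).
Definition is_coset d (C : ptset d) : Prop :=
  exists (c : pt d) (H : ptset d), is_subgroup H /\ forall x, C x <-> H (x - c).

Definition Lambda d (G : ptset d) : ptset d :=
  fun l => forall C : ptset d, is_coset C -> (forall g, G g -> C g) -> C l.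

(* A representation l = g + sum_{alpha in G, alpha <> g} m_alpha (alpha - g),
   given by g and a duplicate-free finite list of pairs (alpha, m_alpha)
   (finitely many nonzero coefficients), together with its cost
   max(sum_{m>0} m, - sum_{m<0} m). *)
Definition rep_cost d (G : ptset d) (l : pt d) (k : nat) : Prop :=
  exists (g : pt d) (s : seq (pt d * int)),
    [/\ G g,
        (forall p, p \in s -> G p.1 /\ p.1 <> g),
        uniq (map fst s),
        l = g + \sum_(p <- s) (p.1 - g) *~ p.2
      & Num.max (\sum_(p <- s | 0 < p.2) p.2)
                (\sum_(p <- s | p.2 < 0) (- p.2)) = k%:Z].

(* d(G, l) <= n : since costs are natural numbers, the infimum is <= n iff it
   is attained by a representation of cost <= n (infimum of empty set = +oo). *)
Definition dist_le d (G : ptset d) (l : pt d) (n : nat) : Prop :=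
  exists k : nat, (k <= n)%N /\ rep_cost G l k.

Definition E d (n : nat) (G : ptset d) : ptset d :=
  fun l => [/\ Lambda G l, in_N0 l & dist_le G l n].

(* E_n^{k+1}(T) = iter (k+1) E_n T ; E_n^oo = union over k >= 1 *)
Definition Einf d (n : nat) (T : ptset d) : ptset d :=
  fun l => exists k : nat, iter k.+1 (E n) T l.

(* A set K of lattice points in N_0^d that contains alpha and beta with
   delta := beta - alpha in N^d, and that is closed under x + y - z whenever
   the result stays in N_0^d, is closed under adding delta. Hence the points l
   with l + M delta in K for some M form a set closed under x + y - z without
   restriction (for M large every x + y - z + M delta lies in N_0^d), that is a
   coset; if it contains T, it contains Lambda(T), and every l in
   Lambda(T) /\ N_0^d is recovered as (l + M delta) + alpha - (alpha + M delta).
   Both E_n^oo(T) for n >= 1 and E_1^oo(T u {alpha, beta}) are such sets K,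
   because x + y - z has cost at most 1 over any set containing x, y, z. *)
From mathcomp Require Import all_boot all_order all_algebra.
From mathcomp Require Import ring zify.
Import Order.TTheory GRing.Theory Num.Theory.
Local Open Scope ring_scope.
Set Implicit Arguments. Unset Strict Implicit.

Ltac row_ring := apply/rowP => ?; rewrite !(mxE, mulmxnE); ring.

Section LatticePoints.
Variable d : nat.
Implicit Types (G H K C : ptset d) (x y z v l w : pt d).

Definition affine_closed C := forall x y z, C x -> C y -> C z -> C (x + y - z).

Definition affine_closed_in_N0 K :=
  forall x y z, K x -> K y -> K z -> in_N0 (x + y - z) -> K (x + y - z).

Lemma coset_affine_closed C : is_coset C -> affine_closed C.
Proof.
move=> [c [H [[_ H_sub] C_H]]] x y z /C_H Hx /C_H Hy /C_H Hz; apply/C_H.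
have -> : x + y - z - c = (x - c) - ((z - c) - (y - c)) by row_ring.
exact: H_sub _ _ Hx (H_sub _ _ Hz Hy).
Qed.

Lemma affine_closed_coset C c : C c -> affine_closed C -> is_coset C.
Proof.
move=> Cc C_aff; exists c, (fun x => C (x + c)); split; last first.
  by move=> x; rewrite subrK.
split; first by rewrite add0r.
move=> x y Cx Cy; have -> : x - y + c = (x + c) + c - (y + c) by row_ring.
exact: C_aff.
Qed.

Lemma Lambda_mem G g : G g -> Lambda G g.
Proof. by move=> Gg C _; apply. Qed.

Lemma Lambda_sub G H l : (forall g, G g -> Lambda H g) -> Lambda G l -> Lambda H l.
Proof.
move=> G_H Gl C coC H_C; apply: (Gl C coC) => g Gg.
exact: (G_H g Gg C coC H_C).
Qed.

Lemma rep_cost_mem G g : G g -> rep_cost G g 0%N.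
Proof.
by move=> Gg; exists g, [::]; split => //; rewrite !big_nil ?addr0.
Qed.

Lemma dist_le_affine G x y z : G x -> G y -> G z -> dist_le G (x + y - z) 1%N.
Proof.
move=> Gx Gy Gz.
have [-> | x_neq_z] := eqVneq x z.
  by rewrite addrC addKr; exists 0%N; split => //; apply: rep_cost_mem.
have [-> | y_neq_z] := eqVneq y z.
  by rewrite addrK; exists 0%N; split => //; apply: rep_cost_mem.
exists 1%N; split => //.
have [<- | x_neq_y] := eqVneq x y.
  exists x, [:: (z, -1)]; split => //.
  - by move=> p; rewrite inE => /eqP -> /=; split => // z_x; rewrite z_x eqxx in x_neq_z.
  - by rewrite big_cons big_nil mulrN1z; row_ring.
  - by rewrite !big_cons !big_nil.
exists y, [:: (x, 1); (z, -1)]; split => //.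
- move=> p; rewrite !inE => /orP [] /eqP -> /=; split => // e.
    by rewrite e eqxx in x_neq_y.
  by rewrite e eqxx in y_neq_z.
- by rewrite /= inE x_neq_z.
- by rewrite !big_cons big_nil mulr1z mulrN1z; row_ring.
- by rewrite !big_cons !big_nil.
Qed.

Lemma E_mem n G v : (forall g, G g -> in_N0 g) -> G v -> E n G v.
Proof.
move=> G_N0 Gv; split; [exact: Lambda_mem | exact: G_N0 |].
by exists 0%N; split => //; apply: rep_cost_mem.
Qed.

Section Iteration.
Variables (n : nat) (G : ptset d).
Hypothesis G_N0 : forall g, G g -> in_N0 g.

Lemma iter_E_N0 k v : iter k (E n) G v -> in_N0 v.
Proof. by case: k => [|k] /=; [apply: G_N0 | case]. Qed.

Lemma iter_E_mono j k v : (j <= k)%N -> iter j (E n) G v -> iter k (E n) G v.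
Proof.
elim: k => [|k IH]; first by rewrite leqn0 => /eqP ->.
rewrite leq_eqVlt => /predU1P [-> // | j_le_k] /(IH j_le_k) Ekv.
by apply: E_mem Ekv => u; apply: iter_E_N0.
Qed.

Lemma iter_E_Lambda k v : iter k (E n) G v -> Lambda G v.
Proof.
elim: k v => [|k IH] v /=; first exact: Lambda_mem.
by case=> Lam _ _; apply: Lambda_sub Lam => g /IH.
Qed.

Lemma Einf_mem v : G v -> Einf n G v.
Proof. by exists 0%N; apply: E_mem. Qed.

Lemma Einf_N0 v : Einf n G v -> in_N0 v.
Proof. by case=> k /= []. Qed.

Lemma Einf_Lambda v : Einf n G v -> Lambda G v.
Proof. by case=> k; apply: iter_E_Lambda. Qed.

Lemma Einf_affine_closed_in_N0 : (0 < n)%N -> affine_closed_in_N0 (Einf n G).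
Proof.
move=> n_gt0 x y z [kx Ex] [ky Ey] [kz Ez] xyz_N0.
pose k := maxn kx (maxn ky kz).
have lift j v : (j <= k)%N -> iter j.+1 (E n) G v -> iter k.+1 (E n) G v.
  by move=> j_le_k; apply: iter_E_mono.
have {}Ex := lift _ _ (leq_maxl _ _) Ex.
have {}Ey := lift _ _ (leq_trans (leq_maxl _ _) (leq_maxr _ _)) Ey.
have {}Ez := lift _ _ (leq_trans (leq_maxr _ _) (leq_maxr _ _)) Ez.
exists k.+1; split => //.
- by move=> C coC sub_C; apply: (coset_affine_closed coC); apply: sub_C.
- have [j [j_le1 rep]] := dist_le_affine Ex Ey Ez.
  by exists j; split => //; apply: leq_trans j_le1 n_gt0.
Qed.

End Iteration.

Section Saturation.
Variables (K : ptset d) (alpha beta : pt d).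
Hypotheses (K_N0 : forall x, K x -> in_N0 x) (K_aff : affine_closed_in_N0 K).
Hypotheses (K_alpha : K alpha) (K_beta : K beta) (delta_N : in_N (beta - alpha)).

Let delta := beta - alpha.

Lemma shift_N0 w : exists B, forall M, (B <= M)%N -> in_N0 (w + delta *+ M).
Proof.
exists (\sum_(i < d) `|w ord0 i|)%N => M B_le_M i; rewrite !(mxE, mulmxnE).
have w_le_M : (`|w ord0 i|%N <= M)%N.
  by apply: leq_trans B_le_M; rewrite (bigD1 i) //= leq_addr.
have := delta_N i; rewrite !mxE.
by move: (beta ord0 i - alpha ord0 i) (w ord0 i) w_le_M => a b; nia.
Qed.

Lemma K_shift p M : K p -> K (p + delta *+ M).
Proof.
move=> Kp; elim: M => [|M IH]; first by rewrite mulr0n addr0.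
have -> : p + delta *+ M.+1 = (p + delta *+ M) + beta - alpha by row_ring.
apply: K_aff => //; have <- : p + delta *+ M.+1 = p + delta *+ M + beta - alpha.
  by row_ring.
move=> i; have := delta_N i; rewrite !(mxE, mulmxnE) => /ltW delta_ge0.
by rewrite addr_ge0 ?mulrn_wge0 ?K_N0.
Qed.

Lemma K_shift_le u Mu M : K (u + delta *+ Mu) -> (Mu <= M)%N -> K (u + delta *+ M).
Proof.
by move=> Ku /subnK <-; rewrite addnC mulrnDr addrA; apply: K_shift.
Qed.

Definition shifted_into_K l := exists M, K (l + delta *+ M).

Lemma shifted_into_K_affine_closed : affine_closed shifted_into_K.
Proof.
move=> x y z [Mx Kx] [My Ky] [Mz Kz].
have [B B_N0] := shift_N0 (x + y - z).
pose M := (Mx + My + Mz + B)%N.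
exists M.
have -> : x + y - z + delta *+ M =
    (x + delta *+ M) + (y + delta *+ M) - (z + delta *+ M) by row_ring.
apply: K_aff; [apply: K_shift_le Kx _ | apply: K_shift_le Ky _ |
  apply: K_shift_le Kz _ |]; rewrite ?/M; try lia.
have -> : x + delta *+ M + (y + delta *+ M) - (z + delta *+ M) =
    x + y - z + delta *+ M by row_ring.
by apply: B_N0; rewrite leq_addl.
Qed.

Lemma Lambda_N0_sub (T : ptset d) l :
  (forall t, T t -> K t) -> Lambda T l -> in_N0 l -> K l.
Proof.
move=> T_K Tl l_N0.
have coset : is_coset shifted_into_K.
  by apply: (affine_closed_coset (c := alpha)); first (exists 0%N; rewrite addr0);
    last exact: shifted_into_K_affine_closed.
have [M Kl] := Tl _ coset (fun t Tt => ex_intro _ 0%N (K_shift 0 (T_K _ Tt))).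
have -> : l = (l + delta *+ M) + alpha - (alpha + delta *+ M) by row_ring.
apply: K_aff => //; first exact: K_shift.
by have -> : l + delta *+ M + alpha - (alpha + delta *+ M) = l by row_ring.
Qed.

End Saturation.

Lemma Einf_eq_Lambda_N0 n G alpha beta :
  (0 < n)%N -> (forall g, G g -> in_N0 g) ->
  Einf n G alpha -> Einf n G beta -> in_N (beta - alpha) ->
  forall l, Einf n G l <-> Lambda G l /\ in_N0 l.
Proof.
move=> n_gt0 G_N0 G_alpha G_beta delta_N l; split.
  by move=> Gl; split; [exact: Einf_Lambda Gl | exact: Einf_N0 Gl].
case=> Gl l_N0; apply: Lambda_N0_sub Gl l_N0.
- exact: Einf_N0.
- exact: Einf_affine_closed_in_N0.
- exact: G_alpha.
- exact: G_beta.
- exact: delta_N.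
- exact: Einf_mem.
Qed.

End LatticePoints.

Theorem lemma3p3 (d n : nat) (T : ptset d) :
  (0 < n)%N ->
  (exists t, T t) ->
  (forall t, T t -> in_N0 t) ->
  forall alpha beta : pt d,
    Einf n T alpha -> Einf n T beta -> in_N (beta - alpha) ->
    forall l : pt d,
      (Einf n T l <-> Einf 1 (fun x => T x \/ x = alpha \/ x = beta) l) /\
      (Einf 1 (fun x => T x \/ x = alpha \/ x = beta) l <-> (Lambda T l /\ in_N0 l)).
Proof.
move=> n_gt0 _ T_N0 alpha beta T_alpha T_beta delta_N l.
set S := fun x => T x \/ x = alpha \/ x = beta.
have S_N0 g : S g -> in_N0 g.
  by case=> [/T_N0 // | [->|->]]; [exact: Einf_N0 T_alpha | exact: Einf_N0 T_beta].
have Lambda_S_T v : Lambda S v <-> Lambda T v.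
  split; apply: Lambda_sub => g; last by move=> Tg; apply: Lambda_mem; left.
  by case=> [/Lambda_mem // | [->|->]]; [exact: Einf_Lambda T_alpha | exact: Einf_Lambda T_beta].
have S_alpha : Einf 1 S alpha by apply: Einf_mem => //; right; left.
have S_beta : Einf 1 S beta by apply: Einf_mem => //; right; right.
have T_eq := Einf_eq_Lambda_N0 n_gt0 T_N0 T_alpha T_beta delta_N l.
have S_eq := Einf_eq_Lambda_N0 (ltnSn 0) S_N0 S_alpha S_beta delta_N l.
by rewrite T_eq S_eq Lambda_S_T.
Qed.
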